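(* Let $\alpha>1$. For all $a,b>0$, \[\sup_{x\ge1}\left|x\left(F_\alpha(\tfrac xa)-F_\alpha(\tfrac xb)\right)\right|\le|a-b|\,G_\alpha,\qquad \sup_{x\ge1}\left|x\left(D_xF_\alpha(\tfrac xa)-D_xF_\alpha(\tfrac xb)\right)\right|\le|a-b|\,L_\alpha.\]
   Context: $F_\alpha(x)=\frac{\sin(\frac{2\pi}{1+\alpha})}{\pi}\int_0^x\frac{dy}{1+y^2-2y\cos(\frac{2\pi}{1+\alpha})}$, $K_\alpha(x)=xF_\alpha'(x)=\frac{\sin(\frac{2\pi}{1+\alpha})}\pi\frac{x}{1+x^2-2x\cos(\frac{2\pi}{1+\alpha})}$, $D_x=x\frac d{dx}$. $G_\alpha=\sup_{x\ge0}|F_\alpha'(x)|$ (equal to $\frac1\pi\sin\frac{2\pi}{1+\alpha}$ for $1<\alpha\le3$ and $\frac{1}{\pi\sin\frac{2\pi}{1+\alpha}}$ for $\alpha>3$), and $L_\alpha=\sup_{x\ge0}|K_\alpha'(x)|$. *)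

From Stdlib Require Import Reals.
From Coquelicot Require Import Coquelicot.
Open Scope R_scope.

Definition theta (alpha : R) : R := 2 * PI / (1 + alpha).

Definition Falpha (alpha : R) (x : R) : R :=
  sin (theta alpha) / PI *
  RInt (fun y => / (1 + y ^ 2 - 2 * y * cos (theta alpha))) 0 x.

Definition Dxop (f : R -> R) (x : R) : R := x * Derive f x.

(* K_alpha(x) = x F_alpha'(x), given explicitly *)
Definition Kalpha (alpha : R) (x : R) : R :=
  sin (theta alpha) / PI * (x / (1 + x ^ 2 - 2 * x * cos (theta alpha))).

Definition Galpha (alpha : R) : Rbar :=
  Lub_Rbar (fun v => exists x, 0 <= x /\ v = Rabs (Derive (Falpha alpha) x)).

Definition Lalpha (alpha : R) : Rbar :=
  Lub_Rbar (fun v => exists x, 0 <= x /\ v = Rabs (Derive (Kalpha alpha) x)).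

Definition sup_ge1_abs (g : R -> R) : Rbar :=
  Lub_Rbar (fun v => exists x, 1 <= x /\ v = Rabs (g x)).

From Stdlib Require Import Reals Lra FunctionalExtensionality.
From Coquelicot Require Import Coquelicot.
Open Scope R_scope.

(* For fixed x > 0 the map s |-> x f(x/s) has derivative -y^2 f'(y) at y = x/s.
   Both F_alpha' and K_alpha' satisfy |y^2 f'(y)| = |f'(1/y)|, because the
   quadratic form Q(y) = 1 + y^2 - 2 y cos(theta) obeys Q(1/y) = Q(y)/y^2.
   The mean value theorem in s therefore bounds |x (f(x/a) - f(x/b))| by
   |a - b| times a value of |f'| on the positive half-line. *)

Lemma dilation_mvt (f f' : R -> R) (x a b : R) :
  0 < x -> 0 < a -> 0 < b ->
  (forall y, 0 < y -> is_derive f y (f' y)) ->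
  exists y, 0 < y /\ x * (f (x / a) - f (x / b)) = (b - a) * (y ^ 2 * f' y).
Proof.
  intros hx ha hb hf.
  set (g := fun s => x * f (x / s)).
  set (dg := fun s => - ((x / s) ^ 2 * f' (x / s))).
  assert (hg : forall s, 0 < s -> is_derive g s (dg s)).
  { intros s hs. unfold g, dg.
    replace (- ((x / s) ^ 2 * f' (x / s))) with (x * ((- x / s ^ 2) * f' (x / s)))
      by (field; lra).
    apply (is_derive_scal (fun s => f (x / s))).
    apply (is_derive_comp f (fun s => x / s)).
    - apply hf, Rdiv_lt_0_compat; lra.
    - auto_derive; [lra | field; lra]. }
  assert (hpos : forall s, Rmin b a <= s <= Rmax b a -> 0 < s).
  { intros s hs. pose proof (Rmin_glb_lt b a 0). lra. }
  destruct (MVT_gen g b a dg) as [c [hc hmvt]].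
  - intros s hs. apply hg, hpos. lra.
  - intros s hs. apply continuity_pt_filterlim.
    apply (@ex_derive_continuous R_AbsRing R_NormedModule).
    eexists. apply hg, hpos, hs.
  - exists (x / c). split.
    + apply Rdiv_lt_0_compat; [lra | apply hpos, hc].
    + unfold g, dg in hmvt. lra.
Qed.

Lemma Rbar_le_mult_Lub (c v w : R) (T : R -> Prop) :
  0 <= c -> T w -> v <= c * w -> Rbar_le v (Rbar_mult c (Lub_Rbar T)).
Proof.
  intros hc hw hv.
  pose proof (proj1 (Lub_Rbar_correct T) w hw) as hub.
  destruct (Lub_Rbar T) as [l | |]; simpl in hub.
  - apply Rmult_le_compat_l with (r := c) in hub; simpl; lra.
  - destruct (Rle_lt_or_eq_dec 0 c hc) as [hc0 | <-].
    + simpl. destruct (Rle_dec 0 c) as [hc' |]; [| lra].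
      destruct (Rle_lt_or_eq_dec 0 c hc'); [exact I | lra].
    + rewrite Rbar_mult_0_l. simpl. lra.
  - contradiction.
Qed.

Lemma sup_dilation_diff_le (f f' : R -> R) (a b : R) :
  0 < a -> 0 < b ->
  (forall y, 0 < y -> is_derive f y (f' y)) ->
  (forall y, 0 < y -> Rabs (y ^ 2 * f' y) = Rabs (f' (/ y))) ->
  Rbar_le (sup_ge1_abs (fun x => x * (f (x / a) - f (x / b))))
    (Rbar_mult (Rabs (a - b))
       (Lub_Rbar (fun v => exists y, 0 <= y /\ v = Rabs (Derive f y)))).
Proof.
  intros ha hb hf hsym.
  apply (proj2 (Lub_Rbar_correct _)). intros v [x [hx ->]].
  destruct (dilation_mvt f f' x a b) as [y [hy ->]]; [lra | assumption.. |].
  apply Rbar_le_mult_Lub with (w := Rabs (f' (/ y))).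
  - apply Rabs_pos.
  - exists (/ y). split.
    + apply Rlt_le, Rinv_0_lt_compat, hy.
    + rewrite (is_derive_unique f (/ y) (f' (/ y))); [reflexivity |].
      apply hf, Rinv_0_lt_compat, hy.
  - rewrite Rabs_mult, Rabs_minus_sym, hsym by exact hy. lra.
Qed.

Section Falpha_derivatives.

Variable alpha : R.
Hypothesis sin_theta_neq0 : sin (theta alpha) <> 0.

Definition Qalpha (y : R) : R := 1 + y ^ 2 - 2 * y * cos (theta alpha).

Lemma Qalpha_pos (y : R) : 0 < Qalpha y.
Proof.
  assert (hQ : Qalpha y = (y - cos (theta alpha)) ^ 2 + sin (theta alpha) ^ 2).
  { unfold Qalpha. rewrite <- (sin2_cos2 (theta alpha)). unfold Rsqr. ring. }
  rewrite hQ. pose proof (pow2_ge_0 (y - cos (theta alpha))).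
  assert (0 < sin (theta alpha) ^ 2) by (apply pow2_gt_0, sin_theta_neq0).
  lra.
Qed.

Lemma Qalpha_inv (y : R) : y <> 0 -> Qalpha (/ y) = Qalpha y / y ^ 2.
Proof. intros hy. unfold Qalpha. field. exact hy. Qed.

Definition dFalpha (y : R) : R := sin (theta alpha) / PI / Qalpha y.

Definition dKalpha (y : R) : R :=
  sin (theta alpha) / PI * (1 - y ^ 2) / Qalpha y ^ 2.

Lemma is_derive_Falpha (y : R) : is_derive (Falpha alpha) y (dFalpha y).
Proof.
  assert (hcont : forall z, continuous (fun t => / Qalpha t) z).
  { intros z. apply (@ex_derive_continuous R_AbsRing R_NormedModule).
    unfold Qalpha. auto_derive.
    apply Rgt_not_eq, Qalpha_pos. }
  change (dFalpha y) with (sin (theta alpha) / PI * / Qalpha y).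
  unfold Falpha.
  apply (is_derive_scal (fun x => RInt (fun t => / Qalpha t) 0 x)).
  apply (is_derive_RInt (fun t => / Qalpha t) _ 0 y); [| apply hcont].
  apply filter_forall. intros z. apply (@RInt_correct R_CompleteNormedModule).
  apply ex_RInt_continuous. intros; apply hcont.
Qed.

Lemma is_derive_Kalpha (y : R) : is_derive (Kalpha alpha) y (dKalpha y).
Proof.
  pose proof (Qalpha_pos y). pose proof PI_RGT_0.
  unfold Kalpha, dKalpha, Qalpha in *.
  auto_derive; [lra | field; lra].
Qed.

Lemma Dxop_Falpha : Dxop (Falpha alpha) = Kalpha alpha.
Proof.
  apply functional_extensionality. intros y.
  unfold Dxop. rewrite (is_derive_unique _ _ _ (is_derive_Falpha y)).
  pose proof (Qalpha_pos y). pose proof PI_RGT_0.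
  unfold dFalpha, Kalpha, Qalpha in *. field. lra.
Qed.

Lemma dFalpha_inv (y : R) : y <> 0 -> dFalpha (/ y) = y ^ 2 * dFalpha y.
Proof.
  intros hy. pose proof (Qalpha_pos y). pose proof PI_RGT_0.
  unfold dFalpha. rewrite Qalpha_inv by exact hy. field. lra.
Qed.

Lemma dKalpha_inv (y : R) : y <> 0 -> dKalpha (/ y) = - (y ^ 2 * dKalpha y).
Proof.
  intros hy. pose proof (Qalpha_pos y). pose proof PI_RGT_0.
  unfold dKalpha. rewrite Qalpha_inv by exact hy. field. lra.
Qed.

End Falpha_derivatives.

Lemma sin_theta_pos (alpha : R) : 1 < alpha -> 0 < sin (theta alpha).
Proof.
  intros halpha. pose proof PI_RGT_0.
  apply sin_gt_0; unfold theta.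
  - apply Rdiv_lt_0_compat; lra.
  - apply Rlt_div_l; nra.
Qed.

Theorem lemma5p4 (alpha a b : R) (halpha : 1 < alpha) (ha : 0 < a) (hb : 0 < b) :
  Rbar_le (sup_ge1_abs (fun x => x * (Falpha alpha (x / a) - Falpha alpha (x / b))))
          (Rbar_mult (Finite (Rabs (a - b))) (Galpha alpha)) /\
  Rbar_le (sup_ge1_abs (fun x => x * (Dxop (Falpha alpha) (x / a) - Dxop (Falpha alpha) (x / b))))
          (Rbar_mult (Finite (Rabs (a - b))) (Lalpha alpha)).
Proof.
  assert (hsin : sin (theta alpha) <> 0).
  { apply Rgt_not_eq, sin_theta_pos, halpha. }
  split.
  - apply (sup_dilation_diff_le _ (dFalpha alpha)); try assumption.
    + intros y _. apply is_derive_Falpha, hsin.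
    + intros y hy. rewrite (dFalpha_inv _ hsin) by lra. reflexivity.
  - rewrite Dxop_Falpha by exact hsin.
    apply (sup_dilation_diff_le _ (dKalpha alpha)); try assumption.
    + intros y _. apply is_derive_Kalpha, hsin.
    + intros y hy. rewrite (dKalpha_inv _ hsin), Rabs_Ropp by lra. reflexivity.
Qed.
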